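(* Let $\Omega=\{\Omega_1,\dots,\Omega_N\}$ be the vertex set of a directed weighted graph with (not necessarily symmetric) weight function $d$, let $1\le n<N$, and let $i,j\in\{1,\dots,n\}$. Let $x_1=MMJ(\Omega_i,\Omega_j~|~\Omega_{[1,n]})$, $t_1=MMJ(\Omega_i,\Omega_{n+1}~|~\Omega_{[1,n+1]})$, $t_2=MMJ(\Omega_{n+1},\Omega_j~|~\Omega_{[1,n+1]})$ and $x_2=\max(t_1,t_2)$. Then $MMJ(\Omega_i,\Omega_j~|~\Omega_{[1,n+1]})=\min(x_1,x_2)$.
   Context: $\Omega$ is a finite set of points indexed $\Omega_1,\dots,\Omega_N$, and $\Omega_{[1,n]}=\{\Omega_1,\dots,\Omega_n\}$. $d(x,y)\ge 0$ is the weight of the directed edge from $x$ to $y$ (possibly $d(x,y)\neq d(y,x)$). For a subset $S\subseteq\Omega$, a (directed) path from $i$ to $j$ in $S$ is a finite sequence of points of $S$ (at least two) starting at $i$ and ending at $j$, with no repeated points except that start and end may coincide when $i=j$. A jump of a path is $d(x,y)$ for consecutive points $x$ followed by $y$, and $max\_jump$ of a path is its largest jump. The Min-Max-Jump distance with context $S$ is $MMJ(i,j~|~S)=\min\{max\_jump(\epsilon): \epsilon \text{ a path from } i \text{ to } j \text{ in } S\}$ for $i,j\in S$, with $MMJ(i,i~|~S)=0$. *)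

From HB Require Import structures.
From mathcomp Require Import all_boot all_order all_algebra.
Set Implicit Arguments. Unset Strict Implicit. Unset Printing Implicit Defensive.
Import Order.TTheory GRing.Theory Num.Theory.
Local Open Scope ring_scope.

(* Points Omega_1..Omega_N are represented by the ordinals 'I_N
   (0-based: Omega_k is the ordinal k-1).  The weight function is
   d : 'I_N -> 'I_N -> R, not necessarily symmetric. *)

Section MMJ.
Variables (R : realDomainType) (N : nat) (d : 'I_N -> 'I_N -> R).

Definition is_path (S : {set 'I_N}) (i j : 'I_N) (p : seq 'I_N) : bool :=
  match p with
  | [::] => false
  | x0 :: s =>
      [&& x0 == i, last x0 s == j, s != [::], all (fun x => x \in S) p &
          (if i == j then uniq s else uniq p)]
  end.

Definition jumps (p : seq 'I_N) : seq R :=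
  match p with
  | [::] => [::]
  | x0 :: s => pairmap d x0 s
  end.

(* The largest jump of a path (paths have at least one jump). *)
Definition max_jump (p : seq 'I_N) : R :=
  match jumps p with
  | [::] => 0
  | a :: l => foldr Num.max a l
  end.

(* All sequences of length 2..N+1; every path (no repetitions except
   possibly start = end) has length at most N+1, so this list contains
   every path. *)
Definition candidates : seq (seq 'I_N) :=
  flatten [seq [seq tval t | t : k.-tuple 'I_N] | k <- iota 2 N].

(* The seed d i j is the
   max_jump of the direct path [:: i; j], which is a path whenever
   i, j \in S, i != j; so for i, j in S it does not affect the minimum. *)
Definition MMJ (S : {set 'I_N}) (i j : 'I_N) : R :=
  if i == j then 0
  else \big[Num.min/d i j]_(p <- candidates | is_path S i j p) max_jump p.

End MMJ.

Definition Omega_upto (N n : nat) : {set 'I_N} := [set k : 'I_N | (k < n)%N].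

From HB Require Import structures.
From mathcomp Require Import all_boot all_order all_algebra.
Import Order.TTheory GRing.Theory Num.Theory.
Local Open Scope ring_scope.

Set Implicit Arguments.
Unset Strict Implicit.
Unset Printing Implicit Defensive.

(* For a != b in S, MMJ(a, b | S) <= c exactly when b can be reached from a by
   a walk through S all of whose jumps are at most c: removing the loops of such
   a walk leaves a path.  A walk through S u {w} either avoids w, and then stays
   in S, or splits at w into walks a ~> w and w ~> b; conversely two such walks
   concatenate.  Hence both sides of the identity have the same upper bounds. *)

Section MinMax.
Context {disp : Order.disp_t} {T : orderType disp}.

Lemma ge_foldr_max (a c : T) (l : seq T) :
  (foldr Order.max a l <= c)%O = (a <= c)%O && all (fun r => r <= c)%O l.
Proof. by elim: l => [|b l IH] /=; rewrite ?andbT // ge_max IH andbCA. Qed.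

Lemma ge_bigmin (I : Type) (r : seq I) (P : pred I) (F : I -> T) (x c : T) :
  (\big[Order.min/x]_(p <- r | P p) F p <= c)%O =
  (x <= c)%O || has (fun p => P p && (F p <= c)%O) r.
Proof.
elim: r => [|a r IH]; first by rewrite big_nil orbF.
by rewrite big_cons /=; case: (P a) => //=; rewrite ge_min IH orbCA.
Qed.

End MinMax.

Section Reachability.
Variables (R : realDomainType) (N : nat) (d : 'I_N -> 'I_N -> R).
Implicit Types (S : {set 'I_N}) (a b : 'I_N) (c : R) (s : seq 'I_N).

Definition step_le c S : rel 'I_N := fun a b => (d a b <= c) && (b \in S).

Definition reach c S a b := exists2 s, path (step_le c S) a s & last a s = b.

Lemma path_step_le c S a s :
  path (step_le c S) a s = all (<= c) (pairmap d a s) && all (mem S) s.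
Proof. by elim: s a => [|b s IH] a //=; rewrite IH andbACA. Qed.

Lemma max_jump_le c a s : s != [::] ->
  (max_jump d (a :: s) <= c) = all (<= c) (pairmap d a s).
Proof. by case: s => [|b s] // _; rewrite /max_jump /= ge_foldr_max. Qed.

Lemma uniq_mem_candidates s : (2 <= size s)%N -> uniq s -> s \in candidates N.
Proof.
move=> s_ge2 s_uniq; have s_leN : (size s <= N)%N.
  by rewrite -(card_uniqP s_uniq) -[X in (_ <= X)%N](card_ord N) max_card.
apply/flattenP; exists [seq tval t | t : (size s).-tuple 'I_N].
  by apply/mapP; exists (size s); rewrite // mem_iota s_ge2 addnC addn2 ltnW.
by rewrite [s in s \in _](_ : s = in_tuple s) // map_f ?mem_enum.
Qed.

Lemma MMJ_leP c S a b : a != b -> a \in S -> b \in S ->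
  reflect (reach c S a b) (MMJ d S a b <= c).
Proof.
move=> ab aS bS; rewrite /MMJ (negbTE ab) ge_bigmin; apply: (iffP orP).
  case=> [dab | /hasP [[|a' s] _] //= /andP [/and5P [/eqP-> sb s0 Ss _]]].
    by exists [:: b]; rewrite //= /step_le dab bS.
  rewrite max_jump_le // => jumps_le; exists s; last exact/eqP.
  by case/andP: Ss => _ Ss; rewrite path_step_le jumps_le.
case=> s walk_s sb; right; case: (shortenP walk_s) sb => q walk_q q_uniq _ qb.
have q0 : q != [::] by apply: contra_neq ab => q0; rewrite -qb q0.
move: walk_q; rewrite path_step_le => /andP [jumps_le Sq].
apply/hasP; exists (a :: q).
  by apply: uniq_mem_candidates => //; case: q q0 {jumps_le Sq q_uniq qb}.
by rewrite /= eqxx qb eqxx q0 aS Sq (negbTE ab) -/(uniq (a :: q)) q_uniq max_jump_le.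
Qed.

Lemma MMJ_ge0 S a b : (forall x y, 0 <= d x y) -> 0 <= MMJ d S a b.
Proof.
move=> d_ge0; rewrite /MMJ; case: eqP => // _.
apply: (big_ind (fun x => 0 <= x)) => // [x y x0 y0|p _]; first by rewrite le_min x0.
rewrite /max_jump; case: p => [|x [|y s]] //=.
by elim: (pairmap d y s) => [|r l IH] //=; rewrite le_max IH orbT.
Qed.

Lemma reach_cat c S a b e : reach c S a b -> reach c S b e -> reach c S a e.
Proof.
case=> s1 walk1 s1b [s2 walk2 s2e]; exists (s1 ++ s2).
  by rewrite cat_path walk1 s1b.
by rewrite last_cat s1b.
Qed.

Lemma reach_sub c S S' a b : {subset S <= S'} -> reach c S a b -> reach c S' a b.
Proof.
move=> sSS' [s walk sb]; exists s => //; apply: sub_path walk => x y /andP [dxy yS].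
by rewrite /step_le dxy sSS'.
Qed.

Lemma reach_setU1 c S w a b :
  reach c (w |: S) a b <->
  reach c S a b \/ reach c (w |: S) a w /\ reach c (w |: S) w b.
Proof.
split=> [[s walk sb] | [|[aw wb]]]; last 2 first.
- by apply: reach_sub => x; apply: setU1r.
- exact: reach_cat aw wb.
have [ws | wNs] := boolP (w \in s).
  case/splitPr: ws walk sb => s1 s2.
  rewrite -cat_rcons cat_path last_cat last_rcons => /andP [walk1 walk2] s2b.
  by right; split; [exists (rcons s1 w); rewrite ?last_rcons | exists s2].
left; exists s => //; move: walk; rewrite !path_step_le => /andP [-> /allP Ss] /=.
apply/allP => y ys; move: (Ss y ys); rewrite !inE; case: eqP => // yw.
by rewrite -yw ys in wNs.
Qed.

Lemma MMJ_setU1 S w a b : (forall x y, 0 <= d x y) ->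
  a \in S -> b \in S -> a != w -> w != b ->
  MMJ d (w |: S) a b =
  Num.min (MMJ d S a b) (Num.max (MMJ d (w |: S) a w) (MMJ d (w |: S) w b)).
Proof.
move=> d_ge0 aS bS aw wb; have [<- | ab] := eqVneq a b.
  by rewrite {1 2}/MMJ eqxx; apply/esym/min_idPl; rewrite le_max MMJ_ge0.
have [awS bwS wwS] := And3 (setU1r w aS) (setU1r w bS) (setU11 w S).
apply/eqP/eq_leP => c; rewrite ge_min ge_max; apply/idP/idP.
- move/(MMJ_leP c ab awS bwS)/reach_setU1 => [abS | [aw_le wb_le]].
    by apply/orP; left; apply/(MMJ_leP c ab aS bS).
  by apply/orP; right; apply/andP; split;
    [apply/(MMJ_leP c aw awS wwS) | apply/(MMJ_leP c wb wwS bwS)].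
- case/orP => [/(MMJ_leP c ab aS bS) abS | /andP [aw_le wb_le]];
    apply/(MMJ_leP c ab awS bwS)/reach_setU1; [by left | right].
  by split; [apply/(MMJ_leP c aw awS wwS) | apply/(MMJ_leP c wb wwS bwS)].
Qed.

End Reachability.

Lemma Omega_upto_succ N n (hnN : (n < N)%N) :
  Omega_upto N n.+1 = Ordinal hnN |: Omega_upto N n.
Proof. by apply/setP => k; rewrite !inE ltnS leq_eqVlt -val_eqE. Qed.

Theorem theorem6p2 (R : realDomainType) (N : nat) (d : 'I_N -> 'I_N -> R)
    (d_ge0 : forall x y, 0 <= d x y)
    (n : nat) (hn1 : (1 <= n)%N) (hnN : (n < N)%N)
    (i j : 'I_N) (hi : (i < n)%N) (hj : (j < n)%N) :
  let w : 'I_N := Ordinal hnN in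
  let x1 := MMJ d (Omega_upto N n) i j in
  let t1 := MMJ d (Omega_upto N n.+1) i w in
  let t2 := MMJ d (Omega_upto N n.+1) w j in
  let x2 := Num.max t1 t2 in
  MMJ d (Omega_upto N n.+1) i j = Num.min x1 x2.
Proof.
rewrite /= (Omega_upto_succ hnN); have iS : i \in Omega_upto N n by rewrite inE.
have jS : j \in Omega_upto N n by rewrite inE.
have wNS : Ordinal hnN \notin Omega_upto N n by rewrite inE ltnn.
apply: MMJ_setU1 => //; first by apply: contraNneq wNS => <-.
by apply: contraNneq wNS => ->.
Qed.
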